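(* Let $r$ and $k$ be positive integers with $r+k\equiv 1\pmod 2$ and $k\le r$, let $H$ be the complete graph with $V(H)=[r+k]$, and let $\mathbf{E}=(E_0,E_1,E_2)$ be an ordered partition of $E(H)$. If $|E_1|+2|E_2|<\min\left\{3(r+k-1),\ \frac18(r+k+3)(r+k+5)\right\}$, then $H$ has an almost perfect matching which is also a good matching for $\mathbf{E}$.
   Context: $[m]=\{1,\dots,m\}$. An ordered partition $(E_0,E_1,E_2)$ of a set is a triple of pairwise disjoint (possibly empty) sets with that union. A matching $M$ is a good matching for $\mathbf{E}$ if $M\cap E_2=\emptyset$ and $|M\cap E_1|\le1$. An almost perfect matching of $H$ is a matching covering all but exactly one vertex of $H$. *)

From mathcomp Require Import all_boot.
Set Implicit Arguments. Unset Strict Implicit. Unset Printing Implicit Defensive.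

Definition complete_edges (T : finType) : {set {set T}} :=
  [set e : {set T} | #|e| == 2].

Definition ordered_partition3 (T : finType) (X E0 E1 E2 : {set T}) : Prop :=
  [/\ [disjoint E0 & E1], [disjoint E0 & E2], [disjoint E1 & E2]
    & E0 :|: E1 :|: E2 = X].

Definition is_matching (T : finType) (M : {set {set T}}) : Prop :=
  M \subset complete_edges T /\
  (forall e f, e \in M -> f \in M -> e != f -> [disjoint e & f]).

Definition covered (T : finType) (M : {set {set T}}) : {set T} :=
  \bigcup_(e in M) e.

Definition almost_perfect_matching (T : finType) (M : {set {set T}}) : Prop :=
  is_matching M /\ #|~: covered M| = 1.

Definition good_matching (T : finType) (E0 E1 E2 M : {set {set T}}) : Prop :=
  M :&: E2 = set0 /\ #|M :&: E1| <= 1.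

From mathcomp Require Import all_boot zify.
Set Implicit Arguments. Unset Strict Implicit. Unset Printing Implicit Defensive.

(* Weigh each edge by [e \in E1] + 2 [e \in E2], so that the hypothesis bounds the
   total weight w(V) of the complete graph on V.  By induction on |V|, a good matching
   that is perfect (|V| even) or almost perfect (|V| odd) is built by removing an edge of
   weight at most 1 and recursing on the remaining set; the edge is chosen at a vertex of
   maximum weighted degree, and double counting the degree sum shows that the remaining
   set still has small weight.  Even sets use the bounds w(V) + 2 <= |V| (matching inside
   E0) and w(V) + 3 <= 2|V| (at most one E1-edge).  For odd V, either deleting a vertex of
   maximum degree leaves an even set of the second kind, or three vertices without
   E0-neighbours carry weight at least 3(|V| - 3) + 3 and one edge among them has weight
   1, or an E0-edge at a heaviest vertex having an E0-neighbour can be removed. *)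

Definition weight_bound (n w : nat) : bool :=
  (w < 3 * (n - 1)) && (8 * w < (n + 3) * (n + 5)).

Lemma perfect0_step_arith m w dx du : 4 <= m -> w + 2 <= m -> dx + du <= w ->
  du <= dx -> 2 * w <= (m - 1) * dx + du -> w - dx - du + 2 <= m - 2.
Proof.
move=> m4 hw hs hud h2; rewrite leqNgt; apply/negP => hn.
have dx1 : dx <= 1 by lia.
by case: dx dx1 hs hud h2 hn => [|[|]] //= *; lia.
Qed.

Lemma perfect1_E0_step_arith m w dx du : 4 <= m -> w + 3 <= 2 * m -> dx + du <= w ->
  du <= dx -> 2 * w <= (m - 1) * dx + du -> w - dx - du + 3 <= 2 * (m - 2).
Proof.
move=> m4 hw hs hud h2; rewrite leqNgt; apply/negP => hn.
have dx3 : dx <= 3 by lia.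
by case: dx dx3 hs hud h2 hn => [|[|[|[|]]]] //= *; lia.
Qed.

Lemma perfect1_E1_step_arith m w p q dx dy : 4 <= m -> w + 3 <= 2 * m -> p + q = m - 1 ->
  1 <= p -> 1 <= dy -> dx = p + 2 * q -> dx + dy <= w + 1 ->
  2 * w <= dx + p * dy + q * (w - dx + 2) -> w + 1 - dx - dy + 2 <= m - 2.
Proof.
move=> m4 hw hpq hp hdy hdx hs h2; rewrite leqNgt; apply/negP => hn.
have q1 : q <= 1 by lia.
have dy2 : dy <= 2 by lia.
by case: q q1 hpq hdx h2 hn hs => [|[|]] // _ hpq hdx h2 hn hs;
  case: dy hdy dy2 h2 hn hs => [|[|[|]]] //= *; lia.
Qed.

Lemma three_free_arith n w w' s : 3 <= n -> odd n -> weight_bound n w ->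
  3 * (n - 3) + s + w' <= w -> 3 <= s -> n - 3 = 0 \/ w' + 2 <= n - 3.
Proof.
move=> n3 odd_n hb hw hs.
have [n7|n7] := leqP 7 n; first by right; case/andP: hb; lia.
have : n = 3 \/ n = 5.
  by clear -n3 n7 odd_n; move: n n3 n7 odd_n => [|[|[|[|[|[|[|]]]]]]]; auto.
by case=> ?; subst n; [left | right; case/andP: hb; lia].
Qed.

(* The degree-sum inequality of [odd_step_arith] with dx and p1 replaced by their largest
   admissible values w + 4 - 2n and dy - a.  It is checked by evaluation for n <= 23; for
   larger n the failure of the bound at n - 2 forces dy + du <= 5. *)
Definition odd_step_hyps n w a dy du :=
  [&& weight_bound n w, 2 * n <= w + 4, (0 < a) ==> (n - 1 <= w + 4 - 2 * n) & a <= dy] &&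
  [&& dy <= w + 4 - 2 * n, dy + du <= w, du <= dy & ~~ weight_bound (n - 2) (w - dy - du)].

Definition odd_step_ineq n w a dy du :=
  a * (w + 4 - 2 * n) + dy + (n - a - 1) * du + (dy - a) * (dy - du) < 2 * w.

Definition odd_step_table n :=
  all (fun w => all (fun a => all (fun dy => all (fun du =>
         odd_step_hyps n w a dy du ==> odd_step_ineq n w a dy du)
       (iota 0 dy.+1)) (iota 0 n.+1)) (iota 0 3)) (iota (2 * n - 4) (n + 1)).

Lemma odd_step_table_small : all (fun n => odd n ==> odd_step_table n) (iota 5 19).
Proof. by vm_compute. Qed.

Lemma odd_step_small n w a dy du : 5 <= n -> n <= 23 -> odd n -> a <= 2 ->
  odd_step_hyps n w a dy du -> odd_step_ineq n w a dy du.
Proof.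
move=> n5 n23 odd_n a2 hyps.
have n_in : n \in iota 5 19 by rewrite mem_iota; lia.
case/andP: (hyps) => /and4P [/andP [w1 _] w2 _ _] /and4P [dy1 _ du1 _].
have w_in : w \in iota (2 * n - 4) (n + 1) by rewrite mem_iota; lia.
have a_in : a \in iota 0 3 by rewrite mem_iota; lia.
have dy_in : dy \in iota 0 n.+1 by rewrite mem_iota; lia.
have du_in : du \in iota 0 dy.+1 by rewrite mem_iota; lia.
move: (allP odd_step_table_small n n_in); rewrite odd_n => /allP /(_ w w_in) /allP /(_ a a_in).
by move=> /allP /(_ dy dy_in) /allP /(_ du du_in) /implyP; apply.
Qed.

Lemma odd_step_large n w a dy du : 24 <= n -> a <= 2 ->
  odd_step_hyps n w a dy du -> odd_step_ineq n w a dy du.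
Proof.
move=> n24 a2 /andP [/and4P [/andP [w_lt _] w_ge a_dx a_dy] /and4P [dy_le s_le du_dy /nandP nb]].
rewrite /odd_step_ineq.
have small_sum : dy + du <= 5.
  case: nb => /negP nb.
    suff: w - dy - du >= 3 * (n - 2 - 1) by lia.
    by rewrite leqNgt; apply/negP.
  have : 8 * (w - dy - du) >= (n - 2 + 3) * (n - 2 + 5) by rewrite leqNgt; apply/negP.
  nia.
have du2 : du <= 2 by lia.
clear nb.
case: a a2 a_dx a_dy => [|[|[|]]] // _ a_dx a_dy;
  case: du du2 small_sum s_le du_dy => [|[|[|]]] // _ small_sum s_le du_dy;
  case: dy small_sum a_dy dy_le s_le du_dy => [|[|[|[|[|[|]]]]]] // *; lia.
Qed.

Lemma odd_step_arith n w a p0 p1 dx dy du : 5 <= n -> odd n -> weight_bound n w -> a <= 2 ->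
  dy + du <= w -> du <= dy -> p1 + a <= dy -> 1 <= p0 -> p0 + p1 + a + 1 = n ->
  dy <= dx -> dx + 2 * n <= w + 4 -> (0 < a -> n - 1 <= dx) ->
  2 * w <= a * dx + dy + p1 * dy + p0 * du -> weight_bound (n - 2) (w - dy - du).
Proof.
move=> n5 odd_n hw a2 hs hud hp1 hp0 hn hdy hdx ha hS.
apply: contraT => hnot.
have hyps : odd_step_hyps n w a dy du.
  by case/andP: (hw) => *; apply/andP; split; apply/and4P; split => //; lia.
have ineq : odd_step_ineq n w a dy du.
  by have [n23|n23] := leqP n 23; [exact: odd_step_small | apply: odd_step_large].
move: ineq; rewrite /odd_step_ineq.
have le_dx : a * dx <= a * (w + 4 - 2 * n) by apply: leq_mul => //; lia.
have le_p1 : p1 * (dy - du) <= (dy - a) * (dy - du) by apply: leq_mul => //; lia.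
have split_dy : p1 * dy = p1 * (dy - du) + p1 * du by rewrite -mulnDr subnK.
have split_du : (n - a - 1) * du = p0 * du + p1 * du by rewrite -mulnDl; congr (_ * _); lia.
lia.
Qed.

Lemma set_card_ind (T : finType) (P : {set T} -> Prop) :
  (forall V : {set T}, (forall U : {set T}, #|U| < #|V| -> P U) -> P V) ->
  forall V, P V.
Proof.
move=> IH V; move: {2}#|V| (leqnn #|V|) => n; elim: n V => [|n IHn] V hV.
  by apply: IH => U; lia.
by apply: IH => U hU; apply: IHn; lia.
Qed.

Lemma exists_argmax (T : finType) (X : {set T}) (F : T -> nat) : X != set0 ->
  exists2 x, x \in X & forall v, v \in X -> F v <= F x.
Proof. by case/set0Pn => x0 /(arg_maxnP F) [x]; exists x. Qed.

Lemma leq_sum_const (T : finType) (A : {set T}) (F : T -> nat) K :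
  (forall v, v \in A -> F v <= K) -> \sum_(v in A) F v <= #|A| * K.
Proof. by move=> h; rewrite -sum_nat_const; apply: leq_sum. Qed.

Lemma leq_sum_subset (T : finType) (X A : {set T}) (F : T -> nat) :
  X \subset A -> \sum_(v in X) F v <= \sum_(v in A) F v.
Proof. by move=> XA; rewrite [X in _ <= X](big_setID X) /= (setIidPr XA) leq_addr. Qed.

Lemma sum_indicator (T : finType) (X Y : {set T}) : Y \subset X ->
  \sum_(e in X) (e \in Y : nat) = #|Y|.
Proof.
move=> YX; rewrite (big_setID Y) /= (setIidPr YX) -sum1_card.
rewrite [Z in _ + Z]big1 ?addn0; last by move=> e; rewrite !inE => /andP[/negbTE ->].
by apply: eq_bigr => e ->.
Qed.

Lemma cardsD1D1 (T : finType) (V : {set T}) (x u : T) : x \in V -> u \in V :\ x ->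
  #|V :\ x :\ u| + 2 = #|V|.
Proof. by move=> xV uVx; rewrite (cardsD1 x V) xV (cardsD1 u (V :\ x)) uVx addnC. Qed.

Lemma odd_cardsD1D1 (T : finType) (V : {set T}) (x u : T) : x \in V -> u \in V :\ x ->
  odd #|V :\ x :\ u| = odd #|V|.
Proof. by move=> xV uVx; rewrite -(cardsD1D1 xV uVx) oddD addbF. Qed.

Lemma cardsD1D1_even_small (T : finType) (V : {set T}) (x u : T) : x \in V -> u \in V :\ x ->
  ~~ odd #|V| -> #|V| <= 3 -> #|V :\ x :\ u| = 0.
Proof.
move=> xV uVx; rewrite -(odd_cardsD1D1 xV uVx) -(cardsD1D1 xV uVx).
by case: #|V :\ x :\ u| => [|[|n]] // _; lia.
Qed.

Section Weights.
Variables (T : finType) (E0 E1 E2 : {set {set T}}).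
Hypothesis E_partition : ordered_partition3 (complete_edges T) E0 E1 E2.

Definition weight (e : {set T}) : nat := (e \in E1) + 2 * (e \in E2).

Definition weight_in (V : {set T}) : nat :=
  \sum_(e in complete_edges T | e \subset V) weight e.

Definition wdeg (V : {set T}) (x : T) : nat := \sum_(u in V :\ x) weight [set x; u].

Lemma weight_le2 (e : {set T}) : weight e <= 2.
Proof.
case: E_partition => _ _ d12 _; rewrite /weight.
by case: (boolP (e \in E1)) => h; [rewrite (disjointFr d12 h) | case: (e \in E2)].
Qed.

Lemma weight_in_setT : weight_in [set: T] = #|E1| + 2 * #|E2|.
Proof.
case: E_partition => _ _ _ hU.
have s1 : E1 \subset complete_edges T by rewrite -hU -setUA subsetU // subsetUl orbT.
have s2 : E2 \subset complete_edges T by rewrite -hU subsetUr.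
rewrite /weight_in (eq_bigl [in complete_edges T]) => [|e]; last by rewrite subsetT andbT.
by rewrite big_split -big_distrr /= !sum_indicator.
Qed.

Lemma wdegD1 (V : {set T}) (x u : T) : x \in V -> u \in V :\ x ->
  wdeg V u = wdeg (V :\ x) u + weight [set u; x].
Proof.
move=> xV /setD1P[ux uV]; rewrite /wdeg (big_setD1 x) /=; last by rewrite !inE eq_sym ux.
by rewrite addnC setDDl setUC -setDDl.
Qed.

Lemma edges_through (V : {set T}) (x : T) : x \in V ->
  [set e in complete_edges T | e \subset V & x \in e] = (fun u => [set x; u]) @: (V :\ x).
Proof.
move=> xV; apply/setP => e; rewrite !inE; apply/idP/imsetP.
  case/and3P => /cards2P [a [b [ab ->]]] sub; rewrite !inE.
  have [aV bV] : a \in V /\ b \in V by rewrite !(subsetP sub) ?inE ?eqxx ?orbT.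
  case/orP => /eqP ->.
    by exists b; rewrite // !inE eq_sym ab.
  by exists a; rewrite 1?setUC // !inE ab.
case=> u /setD1P [ux uV] ->; rewrite cards2 (eq_sym x u) ux !inE eqxx andbT.
by apply/subsetP => v; rewrite !inE => /orP [] /eqP ->.
Qed.

Lemma weight_inD1 (V : {set T}) (x : T) : x \in V ->
  weight_in V = wdeg V x + weight_in (V :\ x).
Proof.
move=> xV; rewrite /weight_in (bigID (fun e : {set T} => x \in e)) /=; congr (_ + _).
  have inj : {in V :\ x &, injective (fun u => [set x; u])}.
    move=> u v /setD1P [ux _] /setD1P [vx _] /setP /(_ u).
    by rewrite !inE eqxx orbT (negbTE ux) eq_sym => /esym /eqP.
  rewrite /wdeg -(big_imset _ inj) -edges_through //.
  by apply: eq_bigl => e; rewrite !inE andbA.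
apply: eq_bigl => e; apply/idP/idP.
  case/andP => /andP [-> sub] xe /=; apply/subsetP => v ve; rewrite !inE (subsetP sub) //.
  by rewrite andbT; apply: contraNneq xe => <-.
case/andP => -> /subsetP sub /=; apply/andP; split.
  by apply/subsetP => v /sub /setD1P [].
by apply/negP => /sub; rewrite !inE eqxx.
Qed.

Lemma weight_in0 : weight_in set0 = 0.
Proof.
rewrite /weight_in big_pred0 // => e; rewrite inE subset0.
by apply/negP => /andP[/eqP e2 /eqP e0]; move: e2; rewrite e0 cards0.
Qed.

Lemma sum_wdeg (V : {set T}) : \sum_(v in V) wdeg V v = 2 * weight_in V.
Proof.
elim/set_card_ind: V => V IH.
have [->|[x xV]] := set_0Vmem V; first by rewrite big_set0 weight_in0.
rewrite (big_setD1 x xV) (eq_bigr (fun v => wdeg (V :\ x) v + weight [set v; x])); last first.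
  by move=> v; apply: wdegD1.
rewrite big_split /= IH; last by rewrite (cardsD1 x V) xV.
rewrite (weight_inD1 xV) (eq_bigr (fun v => weight [set x; v])) => [|v _]; last by rewrite setUC.
rewrite /wdeg; lia.
Qed.

Lemma wdeg_le_weight_in (V : {set T}) (x : T) : x \in V -> wdeg V x <= weight_in V.
Proof. by move=> xV; rewrite (weight_inD1 xV) leq_addr. Qed.

Lemma weight_inD2 (V : {set T}) (x u : T) : x \in V -> u \in V :\ x ->
  weight_in (V :\ x :\ u) + wdeg V x + wdeg V u = weight_in V + weight [set x; u].
Proof.
move=> xV uVx; rewrite (weight_inD1 xV) (weight_inD1 uVx) (wdegD1 xV uVx) setUC; lia.
Qed.

Lemma wdeg_le_weight_inD1 (V : {set T}) (x v : T) : x \in V -> v \in V :\ x ->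
  wdeg V v <= weight_in V - wdeg V x + weight [set v; x].
Proof.
move=> xV vVx; rewrite (wdegD1 xV vVx) (weight_inD1 xV) addKn leq_add2r.
exact: wdeg_le_weight_in.
Qed.

Lemma card_le_wdeg (V X : {set T}) (x : T) : X \subset V :\ x ->
  (forall u, u \in X -> 0 < weight [set x; u]) -> #|X| <= wdeg V x.
Proof.
move=> XV pos; rewrite /wdeg -sum1_card.
apply: leq_trans (leq_sum_subset _ XV); exact: leq_sum.
Qed.

Lemma double_weight_in_le (V : {set T}) (u : T) K : u \in V ->
  (forall v, v \in V -> wdeg V v <= K) -> 2 * weight_in V <= wdeg V u + (#|V| - 1) * K.
Proof.
move=> uV le_K; rewrite -sum_wdeg (big_setD1 u uV) leq_add2l.
have -> : #|V| - 1 = #|V :\ u| by rewrite (cardsD1 u V) uV add1n subn1.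
by apply: leq_sum_const => v /setD1P [_ /le_K].
Qed.

Definition E0_free (V : {set T}) : {set T} :=
  [set v in V | [forall u in V :\ v, weight [set v; u] != 0]].

Lemma E0_freeP (V : {set T}) (v : T) :
  reflect (v \in V /\ forall u, u \in V :\ v -> 0 < weight [set v; u]) (v \in E0_free V).
Proof.
rewrite inE; apply: (iffP andP) => -[vV h]; split=> //.
  by move=> u uV; rewrite lt0n; apply: (implyP (forallP h u)).
by apply/forallP => u; apply/implyP => /h; rewrite lt0n.
Qed.

Lemma E0_free_sub (V : {set T}) : E0_free V \subset V.
Proof. by apply/subsetP => v /E0_freeP []. Qed.

Lemma E0_neighbour (V : {set T}) (v : T) : v \in V -> v \notin E0_free V ->
  exists2 u, u \in V :\ v & weight [set v; u] = 0.
Proof.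
move=> vV v_nfree.
have /existsP [u /andP [uV /eqP w0]] : [exists u in V :\ v, weight [set v; u] == 0].
  apply: contraNT v_nfree => /existsPn none; apply/E0_freeP; split=> // u uV.
  by rewrite lt0n; move: (none u); rewrite uV.
by exists u.
Qed.

Lemma E0_free_wdeg (V U : {set T}) (v : T) : v \in E0_free V -> U \subset V -> v \in U ->
  #|U| - 1 <= wdeg U v.
Proof.
case/E0_freeP => _ pos UV vU; rewrite (cardsD1 v U) vU add1n subn1 /=.
apply: card_le_wdeg => // u /setD1P [uv uU]; apply: pos.
by rewrite !inE uv (subsetP UV).
Qed.

(* Requiring [odd #|V|] uncovered vertices makes M perfect on even V and almost perfect
   on odd V. *)
Definition good_matching_on (V : {set T}) (M : {set {set T}}) (b : nat) : Prop :=
  [/\ forall e, e \in M -> [/\ #|e| = 2, e \subset V & e \notin E2],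
      forall e f, e \in M -> f \in M -> e != f -> [disjoint e & f],
      #|V :\: covered M| = odd #|V| &
      #|M :&: E1| <= b].

Lemma good_matching_on0 (V : {set T}) : #|V| <= 1 -> good_matching_on V set0 0.
Proof.
move=> V1; split.
- by move=> e; rewrite inE.
- by move=> e f; rewrite inE.
- by rewrite /covered big_set0 setD0; case: #|V| V1 => [|[|]].
- by rewrite set0I cards0.
Qed.

Lemma good_matching_on_mono (V : {set T}) (M : {set {set T}}) b b' :
  b <= b' -> good_matching_on V M b -> good_matching_on V M b'.
Proof. by move=> le_b [edgesM disjM uncovM E1M]; split => //; apply: leq_trans le_b. Qed.

Lemma good_matching_onU (V : {set T}) (u v : T) (M : {set {set T}}) b :
  u \in V -> v \in V :\ u -> weight [set u; v] <= 1 ->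
  good_matching_on (V :\ u :\ v) M b ->
  good_matching_on V ([set u; v] |: M) (b + weight [set u; v]).
Proof.
move=> uV /setD1P [vu vV] w1 [edgesM disjM uncovM E1M].
have avoid z e : e \in M -> z \in e -> (z != u) && (z != v).
  move=> eM ze; case: (edgesM e eM) => _ /subsetP /(_ z ze) + _.
  by rewrite !inE => /and3P [-> ->].
have uvM : [set u; v] \notin M.
  by apply/negP => /(avoid u); rewrite !inE eqxx => /(_ isT).
have uvE2 : [set u; v] \notin E2.
  by apply/negP => uvE2; move: w1; rewrite /weight uvE2; lia.
have uv_disj f : f \in M -> [disjoint [set u; v] & f].
  move=> fM; rewrite disjoint_subset; apply/subsetP => z; rewrite !inE.
  by case/orP => /eqP ->; apply/negP => /(avoid _ _ fM); rewrite eqxx ?andbF.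
split.
- move=> e; rewrite in_setU1 => /predU1P [->|eM].
    split => //; first by rewrite cards2 eq_sym vu.
    by apply/subsetP => z; rewrite !inE => /orP [] /eqP ->.
  case: (edgesM e eM) => -> se ->; split => //.
  by apply: subset_trans se _; apply/subsetP => z /setD1P [_ /setD1P []].
- move=> e f; rewrite !in_setU1 => /predU1P [->|eM] /predU1P [->|fM].
  + by rewrite eqxx.
  + by move=> _; apply: uv_disj.
  + by move=> _; rewrite disjoint_sym; apply: uv_disj.
  + exact: disjM.
- rewrite /covered big_setU1 //=.
  have -> : V :\: ([set u; v] :|: \bigcup_(e in M) e) = (V :\ u :\ v) :\: covered M.
    apply/setP => z; rewrite !inE /covered.
    by case: (z == u); case: (z == v); case: (z \in V); case: (z \in \bigcup_(e in M) e).
  rewrite uncovM (cardsD1 u V) uV (cardsD1 v (V :\ u)) !inE vu vV /=.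
  by rewrite negbK add0n.
- rewrite setIUl; apply: leq_trans (leq_card_setU _ _) _; rewrite addnC leq_add //.
  rewrite /weight; case E1uv : ([set u; v] \in E1) => /=.
    by rewrite (leq_trans (subset_leq_card (subsetIl _ _))) ?cards1.
  suff -> : [set [set u; v]] :&: E1 = set0 by rewrite cards0.
  by apply/setP => z; rewrite !inE; case: eqP => // ->; rewrite E1uv.
Qed.

Lemma good_matching_onD1 (V : {set T}) (x : T) (M : {set {set T}}) b :
  x \in V -> ~~ odd #|V :\ x| -> good_matching_on (V :\ x) M b -> good_matching_on V M b.
Proof.
move=> xV even_Vx [edgesM disjM uncovM E1M]; split => //.
- move=> e eM; case: (edgesM e eM) => -> se ->; split => //.
  by apply: subset_trans se _; apply/subsetP => z /setD1P [].
- have xM : x \notin covered M.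
    apply/bigcupP => -[e eM xe]; case: (edgesM e eM) => _ /subsetP /(_ x xe) + _.
    by rewrite !inE eqxx.
  rewrite (cardsD1 x) !inE xM xV /=.
  have -> : (V :\: covered M) :\ x = (V :\ x) :\: covered M.
    by apply/setP => z; rewrite !inE; case: (z == x); case: (z \in V); case: (z \in covered M).
  by rewrite uncovM (negbTE even_Vx) (cardsD1 x V) xV /= (negbTE even_Vx).
Qed.

Lemma E0_pair_at_max (V : {set T}) (x u : T) : x \in V -> u \in V :\ x ->
  (forall v, v \in V -> wdeg V v <= wdeg V x) -> weight [set x; u] = 0 ->
  [/\ weight_in (V :\ x :\ u) = weight_in V - wdeg V x - wdeg V u,
      wdeg V x + wdeg V u <= weight_in V, wdeg V u <= wdeg V x
    & 2 * weight_in V <= (#|V| - 1) * wdeg V x + wdeg V u].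
Proof.
move=> xV uVx xmax wxu; have uV : u \in V by case/setD1P: uVx.
have := weight_inD2 xV uVx; rewrite wxu addn0 => rest.
have := double_weight_in_le uV xmax; have := xmax u uV; split; lia.
Qed.

Lemma perfect_matching0 (V : {set T}) : ~~ odd #|V| ->
  (#|V| = 0 \/ weight_in V + 2 <= #|V|) -> exists M, good_matching_on V M 0.
Proof.
elim/set_card_ind: V => V IH even_V hw.
have [V0|V_pos] := posnP #|V|; first by exists set0; apply: good_matching_on0; rewrite V0.
have {}hw : weight_in V + 2 <= #|V| by case: hw => // V0; move: V_pos; rewrite V0.
have [x xV xmax] : exists2 x, x \in V & forall v, v \in V -> wdeg V v <= wdeg V x.
  by apply: exists_argmax; rewrite -card_gt0.
have [u uVx wxu] : exists2 u, u \in V :\ x & weight [set x; u] = 0.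
  apply: (E0_neighbour xV); apply: contraTN hw => /E0_free_wdeg /(_ (subxx V) xV) dx.
  by have := wdeg_le_weight_in xV; rewrite -ltnNge; lia.
have cardV := cardsD1D1 xV uVx.
have [rest dxu dux sum_le] := E0_pair_at_max xV uVx xmax wxu.
have [M hM] : exists M, good_matching_on (V :\ x :\ u) M 0.
  apply: IH; [lia | by rewrite (odd_cardsD1D1 xV uVx) |].
  have [V3|V4] := leqP #|V| 3; first by left; exact: cardsD1D1_even_small.
  right.
  rewrite rest (_ : #|V :\ x :\ u| = #|V| - 2); last by lia.
  by apply: perfect0_step_arith; lia.
by exists ([set x; u] |: M); have := good_matching_onU xV uVx _ hM; rewrite wxu; apply.
Qed.

Definition E1_nbrs (V : {set T}) (x : T) : {set T} :=
  [set v in V :\ x | weight [set x; v] == 1].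

Lemma E1_nbrs_sub (V : {set T}) (x : T) : E1_nbrs V x \subset V :\ x.
Proof. by apply/subsetP => v; rewrite inE => /andP []. Qed.

Lemma E0_free_not_E1_nbr (V : {set T}) (x v : T) : x \in E0_free V ->
  v \in (V :\ x) :\: E1_nbrs V x -> weight [set x; v] = 2.
Proof.
case/E0_freeP => _ pos /setDP [vVx vP].
have : weight [set x; v] != 1 by apply: contra vP => w1; rewrite inE vVx.
by have := pos v vVx; have := weight_le2 [set x; v]; lia.
Qed.

Lemma wdeg_E0_free (V : {set T}) (x : T) : x \in V -> x \in E0_free V ->
  wdeg V x + #|E1_nbrs V x| = 2 * (#|V| - 1).
Proof.
move=> xV xfree; rewrite /wdeg (big_setID (E1_nbrs V x)) /= (setIidPr (E1_nbrs_sub _ _)).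
rewrite (eq_bigr (fun=> 1)) => [|v]; last by rewrite inE => /andP [_ /eqP].
rewrite [\sum_(i in _ :\: _) _](eq_bigr (fun=> 2)) => [|v]; last exact: E0_free_not_E1_nbr xfree.
rewrite !sum_nat_const cardsD (setIidPr (E1_nbrs_sub _ _)).
have := subset_leq_card (E1_nbrs_sub V x); rewrite (cardsD1 x V) xV add1n subn1 /=; lia.
Qed.

Lemma double_weight_in_le_E0_free (V : {set T}) (x : T) K : x \in V -> x \in E0_free V ->
  (forall v, v \in E1_nbrs V x -> wdeg V v <= K) ->
  2 * weight_in V <= wdeg V x + #|E1_nbrs V x| * K
                     + (#|V| - 1 - #|E1_nbrs V x|) * (weight_in V - wdeg V x + 2).
Proof.
move=> xV xfree le_K; rewrite -sum_wdeg (big_setD1 x xV) -addnA leq_add2l.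
rewrite (big_setID (E1_nbrs V x)) /= (setIidPr (E1_nbrs_sub _ _)) leq_add //.
  exact: leq_sum_const.
have -> : #|V| - 1 - #|E1_nbrs V x| = #|(V :\ x) :\: E1_nbrs V x|.
  by rewrite cardsD (setIidPr (E1_nbrs_sub _ _)) (cardsD1 x V) xV add1n subn1.
apply: leq_sum_const => v vR.
rewrite -(E0_free_not_E1_nbr xfree vR) setUC; apply: wdeg_le_weight_inD1 => //.
by move: vR; rewrite inE => /andP [].
Qed.

Lemma perfect_matching1_at_E0_free (V : {set T}) (x : T) : x \in V -> x \in E0_free V ->
  ~~ odd #|V| -> weight_in V + 3 <= 2 * #|V| -> exists M, good_matching_on V M 1.
Proof.
move=> xV xfree even_V hw.
have dxP := wdeg_E0_free xV xfree; have dxw := wdeg_le_weight_in xV.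
have [y yP ymax] : exists2 y, y \in E1_nbrs V x &
    forall v, v \in E1_nbrs V x -> wdeg V v <= wdeg V y.
  by apply: exists_argmax; rewrite -card_gt0; lia.
have [yVx wxy] : y \in V :\ x /\ weight [set x; y] = 1.
  by move: yP; rewrite inE => /andP [-> /eqP].
have [M hM] : exists M, good_matching_on (V :\ x :\ y) M 0.
  apply: perfect_matching0; first by rewrite (odd_cardsD1D1 xV yVx).
  have [V3|V4] := leqP #|V| 3; first by left; exact: cardsD1D1_even_small.
  right.
  have cardP : #|E1_nbrs V x| <= #|V| - 1.
    by have := subset_leq_card (E1_nbrs_sub V x); rewrite (cardsD1 x V) xV add1n subn1.
  have P1 : 0 < #|E1_nbrs V x| by rewrite card_gt0; apply/set0Pn; exists y.
  have dy1 : 1 <= wdeg V y by rewrite (wdegD1 xV yVx) setUC wxy addn1.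
  have := cardsD1D1 xV yVx; have := weight_inD2 xV yVx; rewrite wxy.
  have := double_weight_in_le_E0_free xV xfree ymax.
  have := @perfect1_E1_step_arith #|V| (weight_in V) #|E1_nbrs V x|
    (#|V| - 1 - #|E1_nbrs V x|) (wdeg V x) (wdeg V y); lia.
by exists ([set x; y] |: M); have := good_matching_onU xV yVx _ hM; rewrite wxy; apply.
Qed.

Lemma perfect_matching1 (V : {set T}) : ~~ odd #|V| ->
  (#|V| = 0 \/ weight_in V + 3 <= 2 * #|V|) -> exists M, good_matching_on V M 1.
Proof.
elim/set_card_ind: V => V IH even_V hw.
have [V0|V_pos] := posnP #|V|.
  by exists set0; apply: good_matching_on_mono (good_matching_on0 _); rewrite ?V0.
have {}hw : weight_in V + 3 <= 2 * #|V| by case: hw => // V0; move: V_pos; rewrite V0.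
have [x xV xmax] : exists2 x, x \in V & forall v, v \in V -> wdeg V v <= wdeg V x.
  by apply: exists_argmax; rewrite -card_gt0.
case: (boolP (x \in E0_free V)) => [xfree | /(E0_neighbour xV) [u uVx wxu]].
  exact: perfect_matching1_at_E0_free xV xfree even_V hw.
have cardV := cardsD1D1 xV uVx.
have [rest dxu dux sum_le] := E0_pair_at_max xV uVx xmax wxu.
have [M hM] : exists M, good_matching_on (V :\ x :\ u) M 1.
  apply: IH; [lia | by rewrite (odd_cardsD1D1 xV uVx) |].
  have [V3|V4] := leqP #|V| 3; first by left; exact: cardsD1D1_even_small.
  right; rewrite rest (_ : #|V :\ x :\ u| = #|V| - 2); last by lia.
  by apply: perfect1_E0_step_arith; lia.
by exists ([set x; u] |: M); have := good_matching_onU xV uVx _ hM; rewrite wxu addn0; apply.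
Qed.

Lemma weight_in_three_E0_free (V : {set T}) (x y z : T) :
  x \in E0_free V -> y \in E0_free V -> z \in E0_free V -> x != y -> y != z -> z != x ->
  3 * (#|V| - 3) + (weight [set x; y] + weight [set x; z] + weight [set y; z])
    + weight_in (V :\ x :\ y :\ z) <= weight_in V.
Proof.
move=> xA yA zA xy yz zx.
have [yx zy xz] : [/\ y != x, z != y & x != z] by split; rewrite eq_sym.
have [xV yV zV] := And3 (subsetP (E0_free_sub V) x xA)
  (subsetP (E0_free_sub V) y yA) (subsetP (E0_free_sub V) z zA).
have yVx : y \in V :\ x by rewrite !inE yx yV.
have zVx : z \in V :\ x by rewrite !inE zx zV.
have zVy : z \in V :\ y by rewrite !inE zy zV.
have zVxy : z \in V :\ x :\ y by rewrite !inE zy zx zV.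
have yVxz : y \in V :\ x :\ z by rewrite !inE yz yx yV.
have xVyz : x \in V :\ y :\ z by rewrite !inE xz xy xV.
have xVy : x \in V :\ y by case/setD1P: xVyz.
have sub2 a b : V :\ a :\ b \subset V := subset_trans (subD1set _ _) (subD1set _ _).
have dx := E0_free_wdeg xA (sub2 y z) xVyz.
have dy := E0_free_wdeg yA (sub2 x z) yVxz.
have dz := E0_free_wdeg zA (sub2 x y) zVxy.
have := cardsD1D1 yV zVy; have := cardsD1D1 xV zVx; have := cardsD1D1 xV yVx.
rewrite (weight_inD1 xV) (weight_inD1 yVx) (weight_inD1 zVxy).
rewrite (wdegD1 yV xVy) (wdegD1 zVy xVyz) (wdegD1 zVx yVxz) !(setUC [set x]) (setUC [set y]).
by move=> c1 c2 c3; clear -dx dy dz c1 c2 c3; lia.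
Qed.

Lemma three_E0_free_matching_at (V : {set T}) (x y z : T) :
  x \in E0_free V -> y \in E0_free V -> z \in E0_free V -> x != y -> y != z -> z != x ->
  weight [set x; y] = 1 -> odd #|V| -> weight_bound #|V| (weight_in V) ->
  exists M, good_matching_on V M 1.
Proof.
move=> xA yA zA xy yz zx wxy odd_V hw.
have [xV yV zV] := And3 (subsetP (E0_free_sub V) x xA)
  (subsetP (E0_free_sub V) y yA) (subsetP (E0_free_sub V) z zA).
have yVx : y \in V :\ x by rewrite !inE eq_sym xy yV.
have zVxy : z \in V :\ x :\ y by rewrite !inE eq_sym yz zx zV.
have pos a b : a \in E0_free V -> b \in V :\ a -> 0 < weight [set a; b].
  by case/E0_freeP => _; apply.
have wxz := pos x z xA ltac:(by case/setD1P: zVxy).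
have wyz := pos y z yA ltac:(by rewrite !inE eq_sym yz zV).
have cardR : #|V :\ x :\ y :\ z| = #|V| - 3.
  by have c := cardsD1D1 xV yVx; rewrite (cardsD1 z) zVxy in c; clear -c; lia.
have [M hM] : exists M, good_matching_on (V :\ x :\ y :\ z) M 0.
  apply: perfect_matching0.
    by move: odd_V; rewrite -(odd_cardsD1D1 xV yVx) (cardsD1 z) zVxy.
  rewrite cardR; apply: (three_free_arith _ odd_V hw (weight_in_three_E0_free xA yA zA xy yz zx)).
    by rewrite -(cardsD1D1 xV yVx) (cardsD1 z) zVxy !addnS.
  by clear -wxy wxz wyz; lia.
have {}hM : good_matching_on (V :\ x :\ y) M 0.
  apply: (good_matching_onD1 zVxy _ hM).
  by move: odd_V; rewrite -(odd_cardsD1D1 xV yVx) (cardsD1 z) zVxy.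
by exists ([set x; y] |: M); have := good_matching_onU xV yVx _ hM; rewrite wxy; apply.
Qed.

Lemma three_E0_free_matching (V : {set T}) : 2 < #|E0_free V| -> odd #|V| ->
  weight_bound #|V| (weight_in V) -> exists M, good_matching_on V M 1.
Proof.
move=> /[dup] A3 /card_gt2P [x [y [z [[xA yA zA] [xy yz zx]]]]] odd_V hw.
case: (eqVneq (weight [set x; y]) 1) => [wxy|nxy].
  exact: (three_E0_free_matching_at xA yA zA).
case: (eqVneq (weight [set x; z]) 1) => [wxz|nxz].
  by apply: (three_E0_free_matching_at xA zA yA _ _ _ wxz); rewrite // eq_sym.
case: (eqVneq (weight [set y; z]) 1) => [wyz|nyz].
  exact: (three_E0_free_matching_at yA zA xA).
have pos a b : a \in E0_free V -> b \in E0_free V -> b != a -> 0 < weight [set a; b].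
  case/E0_freeP => _ h bA ba; apply: h.
  by rewrite !inE ba (subsetP (E0_free_sub V) b bA).
have pxy : 0 < weight [set x; y] by apply: pos; rewrite // eq_sym.
have pxz : 0 < weight [set x; z] by apply: pos.
have pyz : 0 < weight [set y; z] by apply: pos; rewrite // eq_sym.
have := weight_le2 [set x; y]; have := weight_le2 [set x; z]; have := weight_le2 [set y; z].
have V3 := leq_trans A3 (subset_leq_card (E0_free_sub V)).
have lb := weight_in_three_E0_free xA yA zA xy yz zx.
case/andP: hw => hw _ l1 l2 l3.
by clear -V3 lb hw pxy pxz pyz nxy nxz nyz l1 l2 l3; lia.
Qed.

Definition E0_nbrs (V : {set T}) (y : T) : {set T} :=
  [set v in V :\ y | weight [set y; v] == 0].

Lemma E0_nbrs_sub (V : {set T}) (y : T) : E0_nbrs V y \subset V :\ y.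
Proof. by apply/subsetP => v; rewrite inE => /andP []. Qed.

Section OddStep.
Variables (V : {set T}) (x y u : T).
Hypotheses (xV : x \in V) (xmax : forall v, v \in V -> wdeg V v <= wdeg V x).
Hypotheses (yV : y \in V) (y_nfree : y \notin E0_free V)
  (ymax : forall v, v \in V :\: E0_free V -> wdeg V v <= wdeg V y).
Hypotheses (u_nbr : u \in E0_nbrs V y)
  (umax : forall v, v \in E0_nbrs V y -> wdeg V v <= wdeg V u).

Let Np := (V :\ y) :\: E0_nbrs V y.

Lemma E0_free_sub_pos_nbrs : E0_free V \subset Np.
Proof.
apply/subsetP => v vA; have /E0_freeP [vV pos] := vA.
have vy : v != y by apply: contraNneq y_nfree => <-.
rewrite !inE vy vV /= -lt0n andbT setUC; apply: pos.
by rewrite !inE eq_sym vy yV.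
Qed.

Lemma card_pos_nbrs_le : #|Np| <= wdeg V y.
Proof.
apply: card_le_wdeg; first exact: subsetDl.
by move=> v /setDP [vVy]; rewrite inE vVy lt0n.
Qed.

Lemma card_nbrs_split : #|E0_nbrs V y| + #|Np| + 1 = #|V|.
Proof.
rewrite /Np cardsD (setIidPr (E0_nbrs_sub V y)) subnKC.
  by rewrite (cardsD1 y V) yV addn1.
exact: subset_leq_card (E0_nbrs_sub V y).
Qed.

Lemma double_weight_in_le_odd :
  2 * weight_in V <= #|E0_free V| * wdeg V x + wdeg V y
    + (#|Np| - #|E0_free V|) * wdeg V y + #|E0_nbrs V y| * wdeg V u.
Proof.
have AN := E0_free_sub_pos_nbrs.
rewrite -sum_wdeg (big_setD1 y yV) (big_setID (E0_nbrs V y)) /= (setIidPr (E0_nbrs_sub V y)).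
rewrite -/Np [X in _ + (_ + X)](big_setID (E0_free V)) /= (setIidPr AN).
have -> : #|Np| - #|E0_free V| = #|Np :\: E0_free V| by rewrite cardsD (setIidPr AN).
have le_A : \sum_(v in E0_free V) wdeg V v <= #|E0_free V| * wdeg V x.
  by apply: leq_sum_const => v /(subsetP (E0_free_sub V)) /xmax.
have le_B : \sum_(v in Np :\: E0_free V) wdeg V v <= #|Np :\: E0_free V| * wdeg V y.
  apply: leq_sum_const => v /setDP [/setDP [/setD1P [_ vV] _] vA]; apply: ymax.
  by rewrite inE vA vV.
have le_0 : \sum_(v in E0_nbrs V y) wdeg V v <= #|E0_nbrs V y| * wdeg V u.
  exact: leq_sum_const.
by clear -le_A le_B le_0; lia.
Qed.

Lemma odd_E0_pair_step : 5 <= #|V| -> odd #|V| -> weight_bound #|V| (weight_in V) ->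
  wdeg V x + 2 * #|V| <= weight_in V + 4 -> #|E0_free V| <= 2 ->
  weight_bound (#|V| - 2) (weight_in (V :\ y :\ u)).
Proof.
move=> V5 odd_V hw dx_small A2.
have AN := E0_free_sub_pos_nbrs.
have [uVy wyu] : u \in V :\ y /\ weight [set y; u] = 0.
  by move: u_nbr; rewrite inE => /andP [-> /eqP].
have uB : u \in V :\: E0_free V.
  rewrite inE (setD1P uVy).2 andbT; apply: contraL u_nbr => /(subsetP AN).
  by rewrite inE => /andP [].
have rest := weight_inD2 yV uVy; rewrite wyu addn0 in rest.
have N0_pos : 0 < #|E0_nbrs V y| by rewrite card_gt0; apply/set0Pn; exists u.
have A_le := subset_leq_card AN.
have dx_free : 0 < #|E0_free V| -> #|V| - 1 <= wdeg V x.
  case/card_gt0P => a aA; have aV := subsetP (E0_free_sub V) a aA.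
  exact: leq_trans (E0_free_wdeg aA (subxx V) aV) (xmax aV).
rewrite (_ : weight_in (V :\ y :\ u) = weight_in V - wdeg V y - wdeg V u); last by lia.
apply: (@odd_step_arith _ _ #|E0_free V| #|E0_nbrs V y| (#|Np| - #|E0_free V|) (wdeg V x)) => //.
- by lia.
- exact: ymax.
- by have := card_pos_nbrs_le; lia.
- by have := card_nbrs_split; lia.
- exact: xmax.
- exact: double_weight_in_le_odd.
Qed.

End OddStep.

Lemma almost_perfect_matching1 (V : {set T}) : odd #|V| ->
  (#|V| = 1 \/ weight_bound #|V| (weight_in V)) -> exists M, good_matching_on V M 1.
Proof.
elim/set_card_ind: V => V IH odd_V hw.
have [V1|V2] := leqP #|V| 1.
  by exists set0; apply: good_matching_on_mono (good_matching_on0 V1).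
have {}hw : weight_bound #|V| (weight_in V) by case: hw => // V1; rewrite V1 in V2.
have [x xV xmax] : exists2 x, x \in V & forall v, v \in V -> wdeg V v <= wdeg V x.
  by apply: exists_argmax; rewrite -card_gt0; lia.
have cardVx : #|V :\ x| + 1 = #|V| by rewrite (cardsD1 x V) xV addnC.
have even_Vx : ~~ odd #|V :\ x| by move: odd_V; rewrite -cardVx addn1.
have [small|large] := leqP (weight_in (V :\ x) + 3) (2 * #|V :\ x|).
  have [M hM] := perfect_matching1 even_Vx (or_intror small).
  by exists M; apply: good_matching_onD1 xV even_Vx hM.
have dx_small : wdeg V x + 2 * #|V| <= weight_in V + 4 by rewrite (weight_inD1 xV); lia.
have [A3|A2] := ltnP 2 #|E0_free V|; first exact: three_E0_free_matching.
have [y yB ymax] : exists2 y, y \in V :\: E0_free V &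
    forall v, v \in V :\: E0_free V -> wdeg V v <= wdeg V y.
  by apply: exists_argmax; rewrite -card_gt0 cardsD (setIidPr (E0_free_sub V)); lia.
have [yV y_nfree] := setDP yB.
have [u u_nbr umax] : exists2 u, u \in E0_nbrs V y &
    forall v, v \in E0_nbrs V y -> wdeg V v <= wdeg V u.
  apply: exists_argmax; have [u uVy wyu] := E0_neighbour yV y_nfree.
  by apply/set0Pn; exists u; rewrite inE uVy wyu.
have [uVy wyu] : u \in V :\ y /\ weight [set y; u] = 0.
  by move: u_nbr; rewrite inE => /andP [-> /eqP].
have cardR := cardsD1D1 yV uVy.
have [M hM] : exists M, good_matching_on (V :\ y :\ u) M 1.
  apply: IH; [lia | by rewrite (odd_cardsD1D1 yV uVy) |].
  have [V3|V4] := leqP #|V| 3; [left; lia | right].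
  rewrite (_ : #|V :\ y :\ u| = #|V| - 2); last by lia.
  apply: (odd_E0_pair_step xV xmax yV y_nfree ymax u_nbr umax) => //.
  have : #|V| != 4 by apply: contraTneq odd_V => ->.
  lia.
by exists ([set y; u] |: M); have := good_matching_onU yV uVy _ hM; rewrite wyu addn0; apply.
Qed.

End Weights.

Theorem lemma14 (r k : nat) (E0 E1 E2 : {set {set 'I_(r + k)}}) :
  0 < r -> 0 < k -> odd (r + k) -> k <= r ->
  ordered_partition3 (complete_edges 'I_(r + k)) E0 E1 E2 ->
  #|E1| + 2 * #|E2| < 3 * (r + k - 1) ->
  8 * (#|E1| + 2 * #|E2|) < (r + k + 3) * (r + k + 5) ->
  exists M : {set {set 'I_(r + k)}},
    almost_perfect_matching M /\ good_matching E0 E1 E2 M.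
Proof.
move=> _ _ odd_n _ partE w_lt w_lt8.
have cardT : #|[set: 'I_(r + k)]| = r + k by rewrite cardsT card_ord.
have [M [edgesM disjM uncovM E1M]] : exists M, good_matching_on E1 E2 [set: 'I_(r + k)] M 1.
  apply: (almost_perfect_matching1 partE); first by rewrite cardT.
  by right; rewrite cardT (weight_in_setT partE); apply/andP.
exists M; split; first split; first split.
- by apply/subsetP => e /edgesM [e2 _ _]; rewrite inE e2.
- exact: disjM.
- by rewrite -setTD uncovM cardT odd_n.
- split => //; apply/setP => e; rewrite !inE.
  by apply/negbTE/negP => /andP [/edgesM [_ _ /negP]].
Qed.
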